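(* Consider the closed-loop switching semilinear system $\Sigma_0=(X,\mathrm{PC},\phi)$ described in the context and suppose $\Sigma_0$ is USGES. Then for every $r>0$ there exist $\underline{c}_r,\overline{c}_r>0$ and a Lipschitz continuous functional $V_r:X\to\mathbb{R}_+$ such that $\underline{c}_r\|x\|\le V_r(x)\le\overline{c}_r\|x\|$ for all $x\in B_X(0,r)$, and $\overline{D}_qV_r(x)\le-\|x\|$ for all $x\in B_X(0,r)$ and $q\in\mathcal{Q}$.
   Context: $X,U$ are Banach spaces, $B_X(0,r)$ is the closed ball of radius $r$. $A$ is the infinitesimal generator of a $C_0$-group $(T_t)_{t\in\mathbb{R}}$ of bounded linear operators on $X$. $\mathcal{Q}$ is a nonempty set and for $q\in\mathcal{Q}$, $f_q:X\times U\to X$ is Lipschitz continuous with a Lipschitz constant $L_f>0$ independent of $q$ and $f_q(0,0)=0$. $K:X\to U$ is globally Lipschitz with $K(0)=0$. For $q\in\mathcal{Q}$ and $x_0\in X$, let $x(\cdot,x_0,q)$ be the unique continuous mild solution of $\dot x=Ax+f_q(x,K(x))$, i.e. $x(t,x_0,q)=T_tx_0+\int_0^tT_{t-s}f_q(x(s,x_0,q),K(x(s,x_0,q)))ds$, and set $T_q(t)x_0=x(t,x_0,q)$. $\mathrm{PC}$ is the set of piecewise constant $\sigma:\mathbb{R}_+\to\mathcal{Q}$; for $\sigma$ equal to $q_k$ on $[t_k,t_{k+1})$, $0=t_0<t_1<\cdots\to\infty$, define $\phi(t,x_0,\sigma)=T_{q_k}(t-t_k)T_{q_{k-1}}(t_k-t_{k-1})\cdots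 T_{q_0}(t_1)x_0$ for $t\in[t_k,t_{k+1})$. $\Sigma_0$ is USGES if for every $r>0$ there exist $M(r),\lambda(r)>0$ with $\|\phi(t,x,\sigma)\|\le M(r)e^{-\lambda(r)t}\|x\|$ for all $t\ge0$, $x\in B_X(0,r)$, $\sigma\in\mathrm{PC}$. For $q\in\mathcal{Q}$, $\overline{D}_qV(x)=\limsup_{h\downarrow0}\frac1h\big(V(T_q(h)x)-V(x)\big)$. *)

From Stdlib Require Import Reals.
From Coquelicot Require Import Coquelicot.
Open Scope R_scope.
Set Implicit Arguments.

Definition C0_group {X : NormedModule R_AbsRing} (T : R -> X -> X) : Prop :=
  (forall t x y, T t (plus x y) = plus (T t x) (T t y)) /\
  (forall t (a : R) x, T t (scal a x) = scal a (T t x)) /\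
  (forall t, exists M, forall x, norm (T t x) <= M * norm x) /\
  (forall x, T 0 x = x) /\
  (forall t s x, T (t + s) x = T t (T s x)) /\
  (forall x, filterlim (fun t => T t x) (locally 0) (locally x)).

Definition Lipschitz {X Y : NormedModule R_AbsRing} (g : X -> Y) : Prop :=
  exists L, 0 <= L /\ forall x y, norm (minus (g x) (g y)) <= L * norm (minus x y).

(* x : [0,oo) -> X is a continuous mild solution of  x' = A x + F x, x(0) = x0,
   where A generates T:  x(t) = T_t x0 + \int_0^t T_{t-s} F(x(s)) ds. *)
Definition mild_solution {X : NormedModule R_AbsRing}
  (T : R -> X -> X) (F : X -> X) (x0 : X) (x : R -> X) : Prop :=
  (forall t, 0 <= t ->
     filterlim x (within (fun s => 0 <= s) (locally t)) (locally (x t))) /\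
  (forall t, 0 <= t ->
     is_RInt (fun s => T (t - s) (F (x s))) 0 t (minus (x t) (T t x0))).

(* Piecewise constant switching signals: sigma = sw_q k on [sw_t k, sw_t (k+1)),
   with 0 = t_0 < t_1 < ... -> oo. *)
Record PC (Q : Type) : Type := mkPC {
  sw_t : nat -> R;
  sw_q : nat -> Q;
  sw_t0 : sw_t 0 = 0;
  sw_inc : forall k, sw_t k < sw_t (S k);
  sw_unb : forall M, exists k, M < sw_t k
}.

Fixpoint sw_state {X Q : Type} (Tq : Q -> R -> X -> X) (s : PC Q) (x0 : X) (k : nat) : X :=
  match k with
  | O => x0
  | S k' => Tq (sw_q s k') (sw_t s (S k') - sw_t s k') (sw_state Tq s x0 k')
  end.

Definition phi_is {X Q : Type} (Tq : Q -> R -> X -> X) (s : PC Q) (x0 : X) (t : R) (y : X) : Prop :=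
  exists k, sw_t s k <= t < sw_t s (S k) /\
            y = Tq (sw_q s k) (t - sw_t s k) (sw_state Tq s x0 k).

Definition USGES {X : NormedModule R_AbsRing} {Q : Type} (Tq : Q -> R -> X -> X) : Prop :=
  forall r, 0 < r -> exists M lam, 0 < M /\ 0 < lam /\
    forall (s : PC Q) (x : X) (t : R) (y : X), 0 <= t -> norm x <= r ->
      phi_is Tq s x t y -> norm y <= M * exp (- lam * t) * norm x.

(* Upper right Dini derivative along mode q:
   limsup_{h -> 0+} (V(T_q(h) x) - V(x)) / h
   = inf_{delta > 0} sup_{0 < h < delta} (...), an extended real. *)
Definition dini_upper {X Q : Type} (Tq : Q -> R -> X -> X) (V : X -> R) (q : Q) (x : X) : Rbar :=
  Rbar_glb (fun y => exists delta, 0 < delta /\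
    y = Rbar_lub (fun z => exists h, 0 < h < delta /\
                    z = Finite ((V (Tq q h x) - V x) / h))).

(* Let USGES on B(0,r) give |phi(t,x,sigma)| <= M0 e^(-lam t) |x|, and pick a
   horizon tau with M0 e^(-lam tau / 2) <= 1.  Take V = (4/lam) W, where
     W(x) = sup { e^(lam t / 2) |phi(t,x,sigma)| : sigma in PC, 0 <= t <= tau }.
   Then |x| <= W(x) <= M0 |x| on the ball, and W(T_q(h) x) <= e^(-lam h / 2) W(x): a
   trajectory from T_q(h) x is the tail of one from x, so for t + h <= tau it is again
   admissible, while for t + h > tau the USGES bound is already below |x|.  W is globally Lipschitz because the switched flow is
   Lipschitz on [0, tau] uniformly in the signal; the Duhamel/Gronwall argument behind this
   needs sup_{0 <= s <= tau} |T_s| < oo, which follows from strong continuity by the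
   uniform boundedness principle (proved below with Sokal's gliding hump). *)

From Stdlib Require Import Reals Lra Lia Classical IndefiniteDescription.
From Coquelicot Require Import Coquelicot.
Open Scope R_scope.

(* Rewriting with [minus_plus_opp] rather than unfolding [minus] keeps the structure
   instances in the shape Coquelicot's [AbelianGroup] lemmas match against; for the same
   reason these lemmas are often instantiated explicitly below, as in [(G := X)]. *)
Lemma minus_plus_opp {G : AbelianGroup} (a b : G) : minus a b = plus a (opp b).
Proof. reflexivity. Qed.

Lemma minus_plus_l {G : AbelianGroup} (a b : G) : minus (plus a b) a = b.
Proof.
  rewrite minus_plus_opp, (plus_comm a b), <- plus_assoc, plus_opp_r, plus_zero_r.
  reflexivity.
Qed.

Lemma plus_minus_r {G : AbelianGroup} (a b : G) : plus (minus a b) b = a.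
Proof.
  rewrite minus_plus_opp, <- plus_assoc, plus_opp_l, plus_zero_r. reflexivity.
Qed.

Lemma minus_minus_self {G : AbelianGroup} (a b : G) : minus (minus a b) a = opp b.
Proof.
  rewrite (minus_plus_opp a b), minus_plus_l. reflexivity.
Qed.

Lemma minus_minus_l {G : AbelianGroup} (a b : G) : minus a (minus a b) = b.
Proof.
  rewrite minus_plus_opp, opp_minus, plus_comm. apply plus_minus_r.
Qed.

Lemma minus_minus_r {G : AbelianGroup} (a b c : G) :
  minus (minus a c) (minus b c) = minus a b.
Proof.
  rewrite (minus_plus_opp (minus a c)), opp_minus. symmetry. apply minus_trans.
Qed.

Lemma minus_split {G : AbelianGroup} (a b p q : G) :
  minus a b = plus (minus p q) (minus (minus a p) (minus b q)).
Proof.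
  rewrite (minus_plus_opp (minus a p)), opp_minus, (minus_trans p a b), (minus_trans q p b),
    !plus_assoc, (plus_comm (minus a p) (minus p q)).
  reflexivity.
Qed.

Lemma plus_minus_minus {G : AbelianGroup} (a b : G) :
  minus (plus a b) (minus a b) = plus b b.
Proof. rewrite (minus_trans a), minus_plus_l, minus_minus_l. reflexivity. Qed.

Lemma scal_two {V : ModuleSpace R_Ring} (x : V) : scal 2 x = plus x x.
Proof.
  replace 2 with (plus (1 : R_Ring) 1) by (compute; lra).
  rewrite scal_distr_r. f_equal; exact (scal_one _).
Qed.

Lemma norm_minus_sym {V : NormedModule R_AbsRing} (a b : V) :
  norm (minus a b) = norm (minus b a).
Proof. rewrite <- norm_opp, opp_minus. reflexivity. Qed.

Lemma norm_le_minus {V : NormedModule R_AbsRing} (a b : V) :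
  norm a <= norm (minus a b) + norm b.
Proof.
  replace (norm a) with (norm (plus (minus a b) b))
    by (f_equal; exact (plus_minus_r (G := V) a b)).
  apply norm_triangle.
Qed.

Lemma norm_minus_le {V : NormedModule R_AbsRing} (a b : V) :
  norm (minus a b) <= norm a + norm b.
Proof. rewrite minus_plus_opp, <- (norm_opp b). apply norm_triangle. Qed.

Lemma norm_minus_triangle {V : NormedModule R_AbsRing} (a b c : V) :
  norm (minus a c) <= norm (minus a b) + norm (minus b c).
Proof. rewrite (minus_trans b). apply norm_triangle. Qed.

Lemma norm_scal_nonneg {V : NormedModule R_AbsRing} (k : R) (x : V) :
  0 <= k -> norm (scal k x) = k * norm x.
Proof.
  intros hk. apply Rle_antisym.
  - rewrite <- (Rabs_pos_eq k) at 2 by lra. exact (norm_scal _ _).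
  - destruct hk as [hk | <-].
    2: { rewrite Rmult_0_l. apply norm_ge_0. }
    assert (Hx : norm x <= / k * norm (scal k x)).
    { rewrite <- (Rabs_pos_eq (/ k)) by (left; apply Rinv_0_lt_compat, hk).
      replace x with (scal (/ k) (scal k x)) at 1 by
        (rewrite scal_assoc; change (mult (/ k) k) with (/ k * k);
         rewrite Rinv_l by lra; exact (scal_one _)).
      exact (norm_scal _ _). }
    apply Rmult_le_compat_l with (r := k) in Hx; [|lra].
    rewrite <- Rmult_assoc, Rinv_r, Rmult_1_l in Hx by lra. exact Hx.
Qed.

Lemma norm_plus_minus_ge {V : NormedModule R_AbsRing} (a b : V) :
  2 * norm b <= norm (plus a b) + norm (minus a b).
Proof.
  replace (2 * norm b) with (norm (minus (plus a b) (minus a b))).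
  { rewrite minus_plus_opp, <- (norm_opp (minus a b)). apply norm_triangle. }
  replace (minus (plus a b) (minus a b)) with (scal 2 b)
    by (rewrite scal_two; symmetry; exact (plus_minus_minus (G := V) a b)).
  apply norm_scal_nonneg. lra.
Qed.

Lemma Lipschitz_scale {X : NormedModule R_AbsRing} (W : X -> R) (k C : R) :
  0 <= k -> 0 <= C -> (forall x y, W x <= W y + C * norm (minus x y)) ->
  Lipschitz (fun x => k * W x).
Proof.
  intros hk hC HW. exists (k * C). split; [apply Rmult_le_pos; assumption|].
  intros x y. change (Rabs (k * W x - k * W y) <= k * C * norm (minus x y)).
  assert (H1 := HW x y). assert (H2 := HW y x). rewrite norm_minus_sym in H2.
  apply Rabs_le. split; nra.
Qed.

Lemma exp_le_compat (x y : R) : x <= y -> exp x <= exp y.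
Proof. intros [h | ->]; [left; apply exp_increasing, h | right; reflexivity]. Qed.

Lemma exp_opp_le (u : R) : 0 <= u <= 1 -> exp (- u) <= 1 - u / 2.
Proof.
  intros hu. rewrite exp_Ropp. assert (h := exp_ineq1_le u). assert (hp := exp_pos u).
  apply Rmult_le_reg_l with (exp u); [lra|]. rewrite Rinv_r by lra. nra.
Qed.

Lemma exp_tail_le_1 (M0 a : R) : 0 < M0 -> 0 < a ->
  exists tau, 0 <= tau /\ M0 * exp (- a * tau) <= 1.
Proof.
  intros hM0 ha. exists (Rabs (ln M0) / a). split.
  { apply Rdiv_le_0_compat; [apply Rabs_pos | exact ha]. }
  replace (- a * (Rabs (ln M0) / a)) with (- Rabs (ln M0)) by (field; lra).
  apply Rle_trans with (M0 * exp (- ln M0)).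
  - apply Rmult_le_compat_l; [lra|]. apply exp_le_compat.
    generalize (Rle_abs (ln M0)). lra.
  - rewrite exp_Ropp, exp_ln by exact hM0. rewrite Rinv_r by lra. lra.
Qed.

Lemma Lub_Rbar_ub (E : R -> Prop) (B z : R) :
  (forall w, E w -> w <= B) -> E z -> z <= real (Lub_Rbar E).
Proof.
  intros HB Hz. destruct (Lub_Rbar_correct E) as [H1 H2].
  destruct (Lub_Rbar E) as [l | |].
  - exact (H1 z Hz).
  - destruct (H2 (Finite B) HB).
  - destruct (H1 z Hz).
Qed.

Lemma Lub_Rbar_le (E : R -> Prop) (B z : R) :
  (forall w, E w -> w <= B) -> E z -> real (Lub_Rbar E) <= B.
Proof.
  intros HB Hz. destruct (Lub_Rbar_correct E) as [H1 H2].
  destruct (Lub_Rbar E) as [l | |].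
  - exact (H2 (Finite B) HB).
  - destruct (H2 (Finite B) HB).
  - destruct (H1 z Hz).
Qed.

Lemma Riemann_sum_linear {V W : NormedModule R_AbsRing} (l : V -> W) (f : R -> V) ptd :
  is_linear l -> Riemann_sum (fun s => l (f s)) ptd = l (Riemann_sum f ptd).
Proof.
  intros Hl. induction ptd using SF_cons_ind.
  - unfold Riemann_sum; simpl. symmetry. apply (linear_zero l Hl).
  - rewrite !Riemann_sum_cons, IHptd, (linear_plus l Hl), (linear_scal l Hl).
    reflexivity.
Qed.

Lemma is_RInt_linear {V W : NormedModule R_AbsRing} (l : V -> W) (f : R -> V) a b I :
  is_linear l -> is_RInt f a b I -> is_RInt (fun s => l (f s)) a b (l I).
Proof.
  intros Hl HI. unfold is_RInt in *.
  apply filterlim_ext with (f := fun ptd => l (scal (sign (b - a)) (Riemann_sum f ptd))).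
  { intros ptd. rewrite (linear_scal l Hl), (Riemann_sum_linear l f ptd Hl). reflexivity. }
  eapply filterlim_comp; [exact HI | apply linear_cont, Hl].
Qed.

(** * Uniform boundedness principle *)

Lemma geometric_increments_bound {V : NormedModule R_AbsRing} (x : nat -> V) (k : R) :
  0 <= k < 1 -> (forall n, norm (minus (x (S n)) (x n)) <= k ^ n) ->
  forall n m, (n <= m)%nat -> norm (minus (x m) (x n)) <= k ^ n / (1 - k).
Proof.
  intros hk Hstep.
  assert (Hd : forall n d,
    norm (minus (x (n + d)%nat) (x n)) <= (k ^ n - k ^ (n + d)) / (1 - k)).
  { intros n d. induction d as [|d IH].
    - rewrite Nat.add_0_r, minus_eq_zero, Rminus_diag. unfold Rdiv.
      rewrite Rmult_0_l. right. exact (norm_zero (V := V)).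
    - rewrite Nat.add_succ_r.
      eapply Rle_trans; [apply (norm_minus_triangle _ (x (n + d)%nat))|].
      specialize (Hstep (n + d)%nat).
      replace ((k ^ n - k ^ S (n + d)) / (1 - k))
        with ((k ^ n - k ^ (n + d)) / (1 - k) + k ^ (n + d)) by (simpl; field; lra).
      lra. }
  intros n m hnm. replace m with (n + (m - n))%nat by lia.
  eapply Rle_trans; [apply Hd|]. apply Rmult_le_compat_r.
  - left. apply Rinv_0_lt_compat. lra.
  - assert (0 <= k ^ (n + (m - n))) by (apply pow_le; lra). lra.
Qed.

Lemma geometric_cauchy_limit (X : CompleteNormedModule R_AbsRing) (x : nat -> X) (k : R) :
  0 <= k < 1 -> (forall n, norm (minus (x (S n)) (x n)) <= k ^ n) ->
  exists y, forall n, norm (minus y (x n)) <= k ^ n / (1 - k).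
Proof.
  intros hk Hstep.
  assert (Hfar := geometric_increments_bound (V := X) x k hk Hstep).
  destruct (proj1 (filterlim_locally_cauchy (F := eventually) x)) as [y Hy].
  { intros eps.
    destruct (pow_lt_1_zero k ltac:(rewrite Rabs_pos_eq; lra) (eps * (1 - k)))
      as [N HN]; [apply Rmult_lt_0_compat; [apply cond_pos | lra]|].
    assert (HkN : forall n, (N <= n)%nat -> k ^ n / (1 - k) < eps).
    { intros n hn. specialize (HN n hn). rewrite Rabs_pos_eq in HN by (apply pow_le; lra).
      apply Rmult_lt_reg_r with (1 - k); [lra|]. unfold Rdiv.
      rewrite Rmult_assoc, Rinv_l, Rmult_1_r by lra. exact HN. }
    exists (fun n => (N <= n)%nat). split; [exists N; auto|].
    intros n m hn hm. apply (norm_compat1 (V := X)).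
    destruct (Nat.le_ge_cases n m) as [h | h].
    - eapply Rle_lt_trans; [apply Hfar, h | apply HkN, hn].
    - rewrite (norm_minus_sym (V := X)).
      eapply Rle_lt_trans; [apply Hfar, h | apply HkN, hm]. }
  exists y. intros n. apply le_epsilon. intros eps heps.
  destruct (Hy _ (locally_le_locally_norm y _ (locally_norm_ball_norm y (mkposreal eps heps))))
    as [N HN].
  specialize (HN (max N n) (Nat.le_max_l _ _)). unfold ball_norm in HN. simpl in HN.
  rewrite (norm_minus_sym (V := X)) in HN.
  specialize (Hfar n (max N n) (Nat.le_max_r _ _)).
  eapply Rle_trans; [apply (norm_minus_triangle (V := X) _ (x (max N n)))|]. lra.
Qed.

Section GlidingHump.

Variables (X : CompleteNormedModule R_AbsRing) (Y : NormedModule R_AbsRing).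
Variables (l : nat -> X -> Y) (m : nat -> R) (u : nat -> X).
Hypothesis l_linear : forall n, is_linear (l n).
Hypothesis l_bound : forall n v, norm (l n v) <= m n * norm v.
Hypothesis u_unit : forall n, norm (u n) <= 1.
Hypothesis u_norming : forall n, 3 / 4 * m n <= norm (l n (u n)).

(* The sign is chosen so that [|l n (x +- v)| >= |l n v|] (norm_plus_minus_ge). *)
Definition hump_step (n : nat) (x : X) : X :=
  let v := scal ((/ 3) ^ n) (u n) in
  if Rle_dec (norm (l n v)) (norm (l n (plus x v))) then plus x v else minus x v.

Fixpoint hump (n : nat) : X :=
  match n with O => zero | S n => hump_step n (hump n) end.

Lemma hump_increment n : norm (minus (hump (S n)) (hump n)) <= (/ 3) ^ n.
Proof.
  assert (Hv : norm (scal ((/ 3) ^ n) (u n)) <= (/ 3) ^ n).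
  { assert (0 < (/ 3) ^ n) by (apply pow_lt; lra).
    rewrite (norm_scal_nonneg (V := X)) by lra. specialize (u_unit n). nra. }
  simpl. unfold hump_step. destruct Rle_dec.
  - rewrite (minus_plus_l (G := X)). exact Hv.
  - rewrite (minus_minus_self (G := X)), (norm_opp (V := X)). exact Hv.
Qed.

Lemma hump_norming n : 3 / 4 * m n * (/ 3) ^ n <= norm (l n (hump (S n))).
Proof.
  assert (Hv : norm (l n (scal ((/ 3) ^ n) (u n))) = (/ 3) ^ n * norm (l n (u n))).
  { rewrite (linear_scal _ (l_linear n)). apply norm_scal_nonneg, pow_le. lra. }
  assert (0 < (/ 3) ^ n) by (apply pow_lt; lra).
  specialize (u_norming n).
  simpl. unfold hump_step. destruct Rle_dec as [h | h]; rewrite Hv in *.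
  - nra.
  - rewrite (linear_minus _ _ _ (l_linear n)).
    rewrite (linear_plus _ (l_linear n)) in h.
    assert (H2 := norm_plus_minus_ge (l n (hump n)) (l n (scal ((/ 3) ^ n) (u n)))).
    rewrite Hv in H2. nra.
Qed.

Lemma gliding_hump : exists x, forall n, m n * (/ 3) ^ n / 4 <= norm (l n x).
Proof.
  destruct (geometric_cauchy_limit X hump (/ 3) ltac:(lra) hump_increment) as [x Hx].
  exists x. intros n.
  destruct (Rlt_or_le (m n) 0) as [Hm | Hm].
  { assert (0 < (/ 3) ^ n) by (apply pow_lt; lra).
    assert (0 <= norm (l n x)) by apply norm_ge_0. nra. }
  assert (Htail : norm (l n (minus x (hump (S n)))) <= m n * ((/ 3) ^ n / 2)).
  { eapply Rle_trans; [apply l_bound|]. apply Rmult_le_compat_l; [exact Hm|].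
    eapply Rle_trans; [apply Hx|]. right. simpl. field. }
  rewrite (linear_minus _ _ _ (l_linear n)) in Htail.
  assert (Hrev := norm_triangle_inv (l n (hump (S n))) (l n x)).
  rewrite norm_minus_sym in Hrev.
  assert (H1 := Rle_abs (norm (l n (hump (S n))) - norm (l n x))).
  assert (H2 := hump_norming n).
  lra.
Qed.

End GlidingHump.

Lemma near_norming_vector {X Y : NormedModule R_AbsRing} (l : X -> Y) (c : R) :
  is_linear l -> 0 <= c -> (exists x, c * norm x < norm (l x)) ->
  exists m u, c < m /\ (forall v, norm (l v) <= m * norm v) /\
    norm u <= 1 /\ 3 / 4 * m <= norm (l u).
Proof.
  intros Hl hc [x Hx].
  set (E := fun z => exists u : X, norm u <= 1 /\ z = norm (l u)).
  (* [m] is the operator norm of [l]. *)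
  destruct (completeness E) as [m [Hub Hleast]].
  { destruct (linear_norm l Hl) as [Ml [HMl0 HMl]]. exists Ml.
    intros z [u [hu ->]]. specialize (HMl u). assert (0 <= norm u) by apply norm_ge_0. nra. }
  { exists (norm (l zero)), zero. split; [rewrite norm_zero; lra | reflexivity]. }
  assert (Hbound : forall v, norm (l v) <= m * norm v).
  { intros v. destruct (Req_dec (norm v) 0) as [h0 | h0].
    { apply norm_eq_zero in h0. subst v. rewrite (linear_zero l Hl), !norm_zero. lra. }
    assert (hv : 0 < / norm v) by (apply Rinv_0_lt_compat; generalize (norm_ge_0 v); lra).
    assert (Hu : E (norm (l (scal (/ norm v) v)))).
    { exists (scal (/ norm v) v). split; [|reflexivity].
      rewrite norm_scal_nonneg, Rinv_l by lra. lra. }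
    apply Hub in Hu. rewrite (linear_scal l Hl), norm_scal_nonneg in Hu by lra.
    apply Rmult_le_compat_l with (r := norm v) in Hu; [|apply norm_ge_0].
    rewrite <- Rmult_assoc, Rinv_r, Rmult_1_l in Hu by lra. lra. }
  assert (Hcm : c < m).
  { specialize (Hbound x). assert (0 <= norm x) by apply norm_ge_0. nra. }
  destruct (classic (exists u, norm u <= 1 /\ 3 / 4 * m <= norm (l u))) as [[u Hu] | Hno].
  { exists m, u. tauto. }
  assert (m <= 3 / 4 * m); [|lra].
  apply Hleast. intros z [u [hu ->]]. apply Rnot_lt_le. intros H.
  apply Hno. exists u. split; lra.
Qed.

Theorem uniform_boundedness {X : CompleteNormedModule R_AbsRing} {Y : NormedModule R_AbsRing}
  {I : Type} (l : I -> X -> Y) :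
  (forall i, is_linear (l i)) -> (forall x, exists B, forall i, norm (l i x) <= B) ->
  exists M, 0 < M /\ forall i x, norm (l i x) <= M * norm x.
Proof.
  intros Hl Hpt. apply NNPP. intros Hno.
  assert (Hbad : forall n : nat, exists i x, 4 ^ n * norm x < norm (l i x)).
  { intros n. apply NNPP. intros Hn. apply Hno. exists (4 ^ n). split; [apply pow_lt; lra|].
    intros i x. apply Rnot_lt_le. intros H. apply Hn. exists i, x. exact H. }
  destruct (functional_choice _ Hbad) as [i Hi].
  assert (Hnorming : forall n, exists p : R * X, 4 ^ n < fst p /\
    (forall v, norm (l (i n) v) <= fst p * norm v) /\
    norm (snd p) <= 1 /\ 3 / 4 * fst p <= norm (l (i n) (snd p))).
  { intros n. destruct (near_norming_vector (l (i n)) (4 ^ n)) as [m [u Hmu]].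
    - apply Hl.
    - left. apply pow_lt. lra.
    - apply Hi.
    - exists (m, u). exact Hmu. }
  destruct (functional_choice _ Hnorming) as [p Hp].
  destruct (gliding_hump X Y (fun n => l (i n)) (fun n => fst (p n)) (fun n => snd (p n))
    (fun n => Hl (i n)) (fun n => proj1 (proj2 (Hp n)))
    (fun n => proj1 (proj2 (proj2 (Hp n)))) (fun n => proj2 (proj2 (proj2 (Hp n)))))
    as [x Hx].
  destruct (Hpt x) as [B HB].
  destruct (Pow_x_infinity (4 / 3) ltac:(rewrite Rabs_pos_eq; lra) (4 * B + 1)) as [N HN].
  specialize (HN N (le_n N)). rewrite Rabs_pos_eq in HN by (apply pow_le; lra).
  specialize (Hx N). specialize (HB (i N)). destruct (Hp N) as [Hm _].
  replace ((4 / 3) ^ N) with (4 ^ N * (/ 3) ^ N) in HN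
    by (rewrite <- Rpow_mult_distr; f_equal; field).
  assert (0 < (/ 3) ^ N) by (apply pow_lt; lra).
  simpl in Hx. nra.
Qed.

(** * C0-groups and mild solutions *)

Section C0Group.

Variables (X : NormedModule R_AbsRing) (T : R -> X -> X).
Hypothesis HT : C0_group T.

Lemma C0_group_0 x : T 0 x = x.
Proof. apply HT. Qed.

Lemma C0_group_add t s x : T (t + s) x = T t (T s x).
Proof. apply HT. Qed.

Lemma C0_group_linear t : is_linear (T t).
Proof.
  destruct HT as [Tadd [Tscal [Tbd _]]].
  apply Build_is_linear; [apply Tadd | apply Tscal |].
  destruct (Tbd t) as [Mt HMt]. exists (Rabs Mt + 1). split; [generalize (Rabs_pos Mt); lra|].
  intros x. eapply Rle_trans; [apply HMt|]. generalize (norm_ge_0 x) (Rle_abs Mt). nra.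
Qed.

Lemma C0_group_continuous x c : filterlim (fun s => T s x) (locally c) (locally (T c x)).
Proof.
  destruct HT as [_ [_ [_ [_ [_ Tcont]]]]].
  apply filterlim_ext with (f := fun s => T c (T (s - c) x)).
  { intros s. rewrite <- C0_group_add. f_equal. ring. }
  apply (filterlim_comp _ _ _ (fun s => T (s - c) x) (T c) _ (locally x));
    [|apply linear_cont, C0_group_linear].
  apply (filterlim_comp _ _ _ (fun s => s - c) (fun t => T t x) _ (locally 0));
    [|apply Tcont].
  intros P [eps HP]. exists eps. intros y hy. apply HP.
  change (Rabs (y - c - 0) < eps). rewrite Rminus_0_r. exact hy.
Qed.

End C0Group.

Lemma C0_group_bounded_unit (X : CompleteNormedModule R_AbsRing) (T : R -> X -> X) :
  C0_group T -> exists M, 0 < M /\ forall s x, 0 <= s <= 1 -> norm (T s x) <= M * norm x.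
Proof.
  intros HT.
  destruct (uniform_boundedness (I := {s : R | 0 <= s <= 1}) (fun s => T (proj1_sig s)))
    as [M [hM HM]].
  - intros [s hs]. apply C0_group_linear, HT.
  - intros x. destruct (bounded_continuity (fun s => T s x) 0 1) as [B HB].
    { intros s _. apply C0_group_continuous, HT. }
    exists B. intros [s hs]. left. apply HB, hs.
  - exists M. split; [exact hM|]. intros s x hs. exact (HM (exist _ s hs) x).
Qed.

Lemma C0_group_bounded (X : CompleteNormedModule R_AbsRing) (T : R -> X -> X) (b : R) :
  C0_group T -> exists M, 0 < M /\ forall s x, 0 <= s <= b -> norm (T s x) <= M * norm x.
Proof.
  intros HT. destruct (C0_group_bounded_unit X T HT) as [M1 [_ HM1]].
  set (M := Rmax 1 M1). assert (hM : 1 <= M) by apply Rmax_l.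
  assert (HM : forall s x, 0 <= s <= 1 -> norm (T s x) <= M * norm x).
  { intros s x hs. eapply Rle_trans; [apply HM1, hs|].
    apply Rmult_le_compat_r; [apply norm_ge_0 | apply Rmax_r]. }
  assert (Hn : forall n s x, 0 <= s <= INR n + 1 -> norm (T s x) <= M ^ S n * norm x).
  { induction n as [|n IH]; intros s x hs.
    - rewrite pow_1. apply HM. simpl in hs. lra.
    - destruct (Rle_or_lt s 1) as [h1 | h1].
      + eapply Rle_trans; [apply HM; lra|]. apply Rmult_le_compat_r; [apply norm_ge_0|].
        rewrite <- (pow_1 M) at 1. apply Rle_pow; [lra | lia].
      + replace s with (1 + (s - 1)) by ring. rewrite (C0_group_add _ T HT).
        eapply Rle_trans; [apply HM; lra|]. rewrite S_INR in hs.
        change (M ^ S (S n)) with (M * M ^ S n). rewrite Rmult_assoc.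
        apply Rmult_le_compat_l; [lra|]. apply IH. lra. }
  destruct (INR_unbounded b) as [n hn]. exists (M ^ S n). split; [apply pow_lt; lra|].
  intros s x hs. apply Hn. lra.
Qed.

Section MildSolution.

Variables (X : NormedModule R_AbsRing) (T : R -> X -> X) (F : X -> X).
Variables (x0 : X) (x : R -> X).
Hypothesis HT : C0_group T.
Hypothesis Hx : mild_solution T F x0 x.

Lemma mild_solution_0 : x 0 = x0.
Proof.
  destruct Hx as [_ HI]. specialize (HI 0 (Rle_refl 0)).
  assert (E := filterlim_locally_unique _ _ _ HI
                 (is_RInt_point (fun s => T (0 - s) (F (x s))) 0)).
  rewrite <- (plus_minus_r (G := X) (x 0) (T 0 x0)), E, plus_zero_l.
  apply (C0_group_0 X T HT).
Qed.

Lemma mild_solution_restart a t : 0 <= a <= t ->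
  is_RInt (fun s => T (t - s) (F (x s))) a t (minus (x t) (T (t - a) (x a))).
Proof.
  intros [ha hat]. destruct (Req_dec a 0) as [-> | ha0].
  { rewrite Rminus_0_r, mild_solution_0. apply Hx. exact hat. }
  destruct (Req_dec a t) as [<- | hat'].
  { rewrite Rminus_diag, (C0_group_0 X T HT), (minus_eq_zero (G := X)).
    apply is_RInt_point. }
  destruct Hx as [_ HI].
  assert (Ha : is_RInt (fun s => T (t - s) (F (x s))) 0 a (minus (T (t - a) (x a)) (T t x0))).
  { assert (H := is_RInt_linear (T (t - a)) _ _ _ _ (C0_group_linear X T HT (t - a)) (HI a ha)).
    rewrite (linear_minus _ _ _ (C0_group_linear X T HT (t - a))), <- (C0_group_add X T HT)
      in H.
    replace (t - a + a) with t in H by ring.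
    apply is_RInt_ext with (2 := H). intros s _.
    rewrite <- (C0_group_add X T HT). f_equal. ring. }
  rewrite <- (minus_minus_r (G := X) _ _ (T t x0)).
  apply is_RInt_Chasles_2 with (a := 0); [lra | apply HI; lra | exact Ha].
Qed.

Lemma mild_solution_bounded b : exists B, forall s, 0 <= s <= b -> norm (x s) <= B.
Proof.
  destruct Hx as [Hc _].
  (* [x] is only continuous within [0, +oo); extend it constantly to the left. *)
  destruct (bounded_continuity (fun s => x (Rmax 0 s)) 0 b) as [B HB].
  { intros s hs. rewrite (Rmax_right 0 s) by lra.
    apply (filterlim_comp _ _ _ (Rmax 0) x _ (within (fun t => 0 <= t) (locally s)));
      [|apply Hc; lra].
    intros P [eps HP]. exists eps. intros y hy. apply HP; [|apply Rmax_l].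
    change (Rabs (y - s) < eps) in hy. change (Rabs (Rmax 0 y - s) < eps).
    unfold Rmax. destruct Rle_dec; [exact hy|].
    rewrite Rabs_left1 in hy by lra. rewrite Rabs_left1 by lra. lra. }
  exists B. intros s hs. specialize (HB s hs). rewrite Rmax_right in HB by lra. lra.
Qed.

End MildSolution.

(** * Switching signals *)

Definition pc_const {Q : Type} (q : Q) : PC Q.
Proof.
  refine (mkPC (fun k => INR k) (fun _ => q) eq_refl _ _).
  - intros k. rewrite S_INR. lra.
  - intros b. destruct (INR_unbounded b) as [n hn]. exists n. lra.
Defined.

Definition pc_cons {Q : Type} (q : Q) (h : R) (hh : 0 < h) (s : PC Q) : PC Q.
Proof.
  refine (mkPC (fun k => match k with O => 0 | S k => h + sw_t s k end)
               (fun k => match k with O => q | S k => sw_q s k end) eq_refl _ _).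
  - intros [|k]; [rewrite sw_t0; lra | generalize (sw_inc s k); lra].
  - intros b. destruct (sw_unb s (b - h)) as [k hk]. exists (S k). lra.
Defined.

Lemma sw_t_nonneg {Q : Type} (s : PC Q) k : 0 <= sw_t s k.
Proof.
  induction k as [|k IH]; [rewrite sw_t0; lra | generalize (sw_inc s k); lra].
Qed.

Lemma sw_state_cons {X Q : Type} (Tq : Q -> R -> X -> X) q h hh (s : PC Q) x k :
  sw_state Tq (pc_cons q h hh s) x (S k) = sw_state Tq s (Tq q h x) k.
Proof.
  induction k as [|k IH].
  - simpl. f_equal. rewrite sw_t0. ring.
  - change (Tq (sw_q s k) (h + sw_t s (S k) - (h + sw_t s k))
              (sw_state Tq (pc_cons q h hh s) x (S k))
            = Tq (sw_q s k) (sw_t s (S k) - sw_t s k) (sw_state Tq s (Tq q h x) k)).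
    rewrite IH. f_equal. ring.
Qed.

Lemma phi_is_cons {X Q : Type} (Tq : Q -> R -> X -> X) q h hh (s : PC Q) x t y :
  phi_is Tq s (Tq q h x) t y -> phi_is Tq (pc_cons q h hh s) x (t + h) y.
Proof.
  intros [k [hk ->]]. exists (S k).
  change (h + sw_t s k <= t + h < h + sw_t s (S k) /\
          Tq (sw_q s k) (t - sw_t s k) (sw_state Tq s (Tq q h x) k)
          = Tq (sw_q s k) (t + h - (h + sw_t s k)) (sw_state Tq (pc_cons q h hh s) x (S k))).
  rewrite sw_state_cons. split; [lra|]. f_equal. ring.
Qed.

Lemma phi_is_0 {X Q : Type} (Tq : Q -> R -> X -> X) (s : PC Q) x :
  phi_is Tq s x 0 (Tq (sw_q s 0) 0 x).
Proof.
  exists O. assert (h := sw_inc s 0). rewrite sw_t0 in *. split; [lra|].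
  simpl. f_equal. ring.
Qed.

(** * Lipschitz dependence of the switched flow on [0, tau] *)

Section FlowLipschitz.

Variables (X : NormedModule R_AbsRing) (T : R -> X -> X) (Q : Type).
Variables (F : Q -> X -> X) (Tq : Q -> R -> X -> X) (L M tau : R).
Hypothesis HT : C0_group T.
Hypothesis HL : 0 < L.
Hypothesis HF : forall q x y, norm (minus (F q x) (F q y)) <= L * norm (minus x y).
Hypothesis HM : 0 < M.
Hypothesis HTM : forall s x, 0 <= s <= tau -> norm (T s x) <= M * norm x.
Hypothesis Hsol : forall q x0, mild_solution T (F q) x0 (fun t => Tq q t x0).

(* Bounding every [T r v], not only [v], lets the estimates below pass through switching
   times without losing a factor [M] each time. *)
Definition horizon_bound (rho A : R) (v : X) : Prop :=
  forall r, 0 <= r <= rho -> norm (T r v) <= A.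

Lemma flow_0 q x : Tq q 0 x = x.
Proof. exact (mild_solution_0 X T (F q) x (fun t => Tq q t x) HT (Hsol q x)). Qed.

Lemma flow_diff_duhamel q x y a u r A S :
  0 <= a <= u -> 0 <= r -> r + (u - a) <= tau ->
  norm (T (r + (u - a)) (minus (Tq q a x) (Tq q a y))) <= A ->
  (forall s, a <= s <= u -> norm (minus (Tq q s x) (Tq q s y)) <= S) ->
  norm (T r (minus (Tq q u x) (Tq q u y))) <= A + (u - a) * (M * L * S).
Proof.
  intros hau hr hru HA HS.
  assert (Tlin := C0_group_linear X T HT).
  assert (Hint := is_RInt_linear (T r) _ _ _ _ (Tlin r)
    (is_RInt_minus _ _ _ _ _ _
       (mild_solution_restart X T (F q) x _ HT (Hsol q x) a u hau)
       (mild_solution_restart X T (F q) y _ HT (Hsol q y) a u hau))).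
  apply norm_RInt_le_const with (M := M * L * S) in Hint; [|lra|].
  2: { intros s hs. cbv beta.
       rewrite <- (linear_minus _ _ _ (Tlin (u - s))), <- (C0_group_add X T HT).
       eapply Rle_trans; [apply HTM; lra|]. rewrite Rmult_assoc.
       apply Rmult_le_compat_l; [lra|]. eapply Rle_trans; [apply HF|].
       apply Rmult_le_compat_l; [lra | apply HS; lra]. }
  rewrite (minus_split (G := X) _ _ (T (u - a) (Tq q a x)) (T (u - a) (Tq q a y))),
    (linear_plus _ (Tlin r)).
  eapply Rle_trans; [apply norm_triangle|].
  rewrite <- (linear_minus _ _ _ (Tlin (u - a))), <- (C0_group_add X T HT).
  lra.
Qed.

Lemma flow_diff_step q x y a b rho A :
  0 <= a <= b -> (b - a) * (M * L) <= 1 / 2 -> 0 <= rho -> rho + (b - a) <= tau ->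
  horizon_bound (rho + (b - a)) A (minus (Tq q a x) (Tq q a y)) ->
  horizon_bound rho (exp (2 * (M * L) * (b - a)) * A) (minus (Tq q b x) (Tq q b y)).
Proof.
  intros hab hstep hrho hrt HA.
  set (D := fun s => minus (Tq q s x) (Tq q s y)).
  set (E := fun z => exists s, a <= s <= b /\ z = norm (D s)).
  destruct (mild_solution_bounded X T (F q) x _ (Hsol q x) b) as [Bx HBx].
  destruct (mild_solution_bounded X T (F q) y _ (Hsol q y) b) as [By HBy].
  assert (HEb : forall z, E z -> z <= Bx + By).
  { intros z [s [hs ->]]. eapply Rle_trans; [apply norm_minus_le|].
    apply Rplus_le_compat; [apply HBx | apply HBy]; lra. }
  assert (HEa : E (norm (D a))) by (exists a; split; [lra | reflexivity]).
  set (S := real (Lub_Rbar E)).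
  assert (HS : forall s, a <= s <= b -> norm (D s) <= S).
  { intros s hs. apply (Lub_Rbar_ub E (Bx + By)); [exact HEb|]. exists s. auto. }
  assert (hS : 0 <= S) by (apply (Rle_trans _ (norm (D a))); [apply norm_ge_0 | apply HS; lra]).
  assert (hA : 0 <= A).
  { apply (Rle_trans _ (norm (T 0 (D a)))); [apply norm_ge_0 | apply HA; lra]. }
  (* Duhamel at [r = 0] gives [S <= A + (b - a) M L S <= A + S / 2]. *)
  assert (HSA : S <= 2 * A).
  { assert (S <= A + (b - a) * (M * L * S)); [|nra].
    apply (Lub_Rbar_le E _ (norm (D a))); [|exact HEa]. intros z [s [hs ->]].
    rewrite <- (C0_group_0 X T HT (D s)).
    eapply Rle_trans.
    - apply (flow_diff_duhamel q x y a s 0 A S); try lra.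
      + apply HA. lra.
      + intros s' hs'. apply HS. lra.
    - apply Rplus_le_compat_l, Rmult_le_compat_r; [|lra].
      apply Rmult_le_pos; [nra | exact hS]. }
  intros r hr. eapply Rle_trans.
  - apply (flow_diff_duhamel q x y a b r A S); try lra; [apply HA; lra | exact HS].
  - assert (H1 := exp_ineq1_le (2 * (M * L) * (b - a))).
    assert (0 <= (b - a) * (M * L)) by (apply Rmult_le_pos; nra). nra.
Qed.

Lemma flow_diff_estimate q x y b rho A :
  0 <= b -> 0 <= rho -> rho + b <= tau ->
  horizon_bound (rho + b) A (minus x y) ->
  horizon_bound rho (exp (2 * (M * L) * b) * A) (minus (Tq q b x) (Tq q b y)).
Proof.
  set (dl := / (2 * (M * L))).
  assert (hdl : 0 < dl) by (apply Rinv_0_lt_compat; nra).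
  assert (hstep : dl * (M * L) = 1 / 2) by (unfold dl; field; nra).
  assert (Hn : forall n b rho A, 0 <= b <= INR n * dl -> 0 <= rho -> rho + b <= tau ->
    horizon_bound (rho + b) A (minus x y) ->
    horizon_bound rho (exp (2 * (M * L) * b) * A) (minus (Tq q b x) (Tq q b y))).
  { induction n as [|n IH]; intros b' rho' A' hb hrho hrt HA.
    - simpl in hb. replace b' with 0 in * by lra.
      rewrite !flow_0, Rmult_0_r, exp_0, Rmult_1_l.
      intros r hr. apply HA. lra.
    - rewrite S_INR in hb.
      destruct (Rle_or_lt b' dl) as [hbd | hbd].
      + assert (H := flow_diff_step q x y 0 b' rho' A').
        rewrite !Rminus_0_r, !flow_0 in H. apply H; try lra; [nra | exact HA].
      + replace (exp (2 * (M * L) * b') * A')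
          with (exp (2 * (M * L) * (b' - (b' - dl))) * (exp (2 * (M * L) * (b' - dl)) * A'))
          by (rewrite <- Rmult_assoc, <- exp_plus; f_equal; f_equal; ring).
        apply flow_diff_step; try lra.
        replace (rho' + (b' - (b' - dl))) with (rho' + dl) by ring.
        apply IH; try lra. replace (rho' + dl + (b' - dl)) with (rho' + b') by ring.
        exact HA. }
  intros hb hrho hrt HA. destruct (INR_unbounded (b / dl)) as [n hn].
  apply (Hn n); auto. split; [exact hb|].
  apply Rmult_lt_compat_r with (r := dl) in hn; [|exact hdl].
  unfold Rdiv in hn. rewrite Rmult_assoc, Rinv_l, Rmult_1_r in hn by lra. lra.
Qed.

Lemma sw_state_diff (s : PC Q) x y k : sw_t s k <= tau ->
  horizon_bound (tau - sw_t s k) (exp (2 * (M * L) * sw_t s k) * (M * norm (minus x y)))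
    (minus (sw_state Tq s x k) (sw_state Tq s y k)).
Proof.
  induction k as [|k IH]; intros hk.
  - rewrite sw_t0, Rmult_0_r, exp_0, Rmult_1_l. intros r hr. apply HTM. lra.
  - assert (hinc := sw_inc s k). assert (hnn := sw_t_nonneg s k).
    replace (exp (2 * (M * L) * sw_t s (S k)) * (M * norm (minus x y)))
      with (exp (2 * (M * L) * (sw_t s (S k) - sw_t s k))
            * (exp (2 * (M * L) * sw_t s k) * (M * norm (minus x y))))
      by (rewrite <- Rmult_assoc, <- exp_plus; f_equal; f_equal; ring).
    apply flow_diff_estimate; try lra.
    replace (tau - sw_t s (S k) + (sw_t s (S k) - sw_t s k)) with (tau - sw_t s k) by ring.
    apply IH. lra.
Qed.

Lemma phi_is_lipschitz (s : PC Q) x y t z : 0 <= t <= tau -> phi_is Tq s x t z ->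
  exists z', phi_is Tq s y t z' /\
    norm (minus z z') <= exp (2 * (M * L) * tau) * M * norm (minus x y).
Proof.
  intros ht [k [hk ->]].
  exists (Tq (sw_q s k) (t - sw_t s k) (sw_state Tq s y k)). split; [exists k; auto|].
  assert (hnn := sw_t_nonneg s k).
  rewrite <- (C0_group_0 X T HT (minus _ _)).
  apply Rle_trans with (exp (2 * (M * L) * (t - sw_t s k))
                        * (exp (2 * (M * L) * sw_t s k) * (M * norm (minus x y)))).
  - apply (flow_diff_estimate _ _ _ _ (tau - t)); try lra.
    replace (tau - t + (t - sw_t s k)) with (tau - sw_t s k) by ring.
    apply sw_state_diff. lra.
  - rewrite <- Rmult_assoc, <- exp_plus, (Rmult_assoc (exp _) M).
    apply Rmult_le_compat_r; [apply Rmult_le_pos; [lra | apply norm_ge_0]|].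
    apply exp_le_compat.
    replace (2 * (M * L) * (t - sw_t s k) + 2 * (M * L) * sw_t s k) with (2 * (M * L) * t)
      by ring.
    apply Rmult_le_compat_l; [nra | lra].
Qed.

End FlowLipschitz.

(** * The Lyapunov functional *)

Lemma dini_upper_le {X Q : Type} (Tq : Q -> R -> X -> X) (V : X -> R) q x (delta n : R) :
  0 < delta -> (forall h, 0 < h < delta -> V (Tq q h x) - V x <= - h * n) ->
  Rbar_le (dini_upper Tq V q x) (Finite (- n)).
Proof.
  intros hdelta Hdec. unfold dini_upper.
  match goal with |- Rbar_le (Rbar_glb ?E) _ =>
    destruct (proj2_sig (Rbar_ex_glb E)) as [Hlb _] end.
  eapply Rbar_le_trans; [apply Hlb; exists delta; split; [exact hdelta | reflexivity]|].
  match goal with |- Rbar_le (Rbar_lub ?E) _ =>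
    destruct (proj2_sig (Rbar_ex_lub E)) as [_ Hl] end.
  apply Hl. intros z [h [hh ->]]. simpl.
  apply Rmult_le_reg_r with h; [lra|]. unfold Rdiv.
  rewrite Rmult_assoc, Rinv_l, Rmult_1_r by lra. specialize (Hdec h hh). lra.
Qed.

Section ConverseLyapunov.

Variables (X : NormedModule R_AbsRing) (Q : Type) (Tq : Q -> R -> X -> X) (q0 : Q).
Variables (r M0 lam tau C : R).
Hypothesis Tq0 : forall q x, Tq q 0 x = x.
Hypothesis hr : 0 <= r.
Hypothesis hM0 : 0 < M0.
Hypothesis hlam : 0 < lam.
Hypothesis htau : 0 <= tau.
Hypothesis hC : 0 <= C.
Hypothesis Hstab : forall s x t y, 0 <= t -> norm x <= r -> phi_is Tq s x t y ->
  norm y <= M0 * exp (- lam * t) * norm x.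
Hypothesis Htail : M0 * exp (- (lam / 2) * tau) <= 1.
Hypothesis Hlip : forall s x y t z, 0 <= t <= tau -> phi_is Tq s x t z ->
  exists z', phi_is Tq s y t z' /\ norm (minus z z') <= C * norm (minus x y).

Definition weighted_norms (x : X) (z : R) : Prop :=
  exists s t y, 0 <= t <= tau /\ phi_is Tq s x t y /\ z = exp (lam / 2 * t) * norm y.

Definition decay_sup (x : X) : R := real (Lub_Rbar (weighted_norms x)).

Lemma weighted_norms_bounded x z :
  weighted_norms x z -> z <= exp (lam / 2 * tau) * C * norm x.
Proof.
  intros [s [t [y [ht [Hy ->]]]]].
  destruct (Hlip s x zero t y ht Hy) as [y0 [Hy0 Hyy0]].
  assert (Hy0z : norm y0 <= 0).
  { assert (H := Hstab s zero t y0 (proj1 ht)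
                   ltac:(rewrite (norm_zero (V := X)); exact hr) Hy0).
    rewrite (norm_zero (V := X)), Rmult_0_r in H. exact H. }
  rewrite (minus_zero_r (G := X)) in Hyy0.
  assert (Hny : norm y <= C * norm x) by (generalize (norm_le_minus y y0); lra).
  rewrite Rmult_assoc.
  apply Rmult_le_compat; [left; apply exp_pos | apply norm_ge_0 | apply exp_le_compat; nra | ].
  exact Hny.
Qed.

Lemma weighted_norms_0 x : weighted_norms x (norm x).
Proof.
  exists (pc_const q0), 0, (Tq q0 0 x). split; [lra|]. split; [apply phi_is_0|].
  rewrite Tq0, Rmult_0_r, exp_0, Rmult_1_l. reflexivity.
Qed.

Lemma norm_le_decay_sup x : norm x <= decay_sup x.
Proof.
  apply (Lub_Rbar_ub _ (exp (lam / 2 * tau) * C * norm x));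
    [apply weighted_norms_bounded | apply weighted_norms_0].
Qed.

Lemma decay_sup_nonneg x : 0 <= decay_sup x.
Proof. apply (Rle_trans _ (norm x)); [apply norm_ge_0 | apply norm_le_decay_sup]. Qed.

Lemma decay_sup_le x B : (forall z, weighted_norms x z -> z <= B) -> decay_sup x <= B.
Proof. intros HB. exact (Lub_Rbar_le _ B _ HB (weighted_norms_0 x)). Qed.

Lemma decay_sup_ball x : norm x <= r -> decay_sup x <= M0 * norm x.
Proof.
  intros hx. apply decay_sup_le. intros z [s [t [y [ht [Hy ->]]]]].
  assert (H := Hstab s x t y (proj1 ht) hx Hy).
  assert (He : exp (lam / 2 * t) * exp (- lam * t) <= 1).
  { rewrite <- exp_plus, <- exp_0. apply exp_le_compat. nra. }
  assert (0 <= M0 * norm x) by (apply Rmult_le_pos; [lra | apply norm_ge_0]).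
  assert (0 < exp (lam / 2 * t)) by apply exp_pos.
  apply Rle_trans with (exp (lam / 2 * t) * (M0 * exp (- lam * t) * norm x)).
  - apply Rmult_le_compat_l; lra.
  - replace (exp (lam / 2 * t) * (M0 * exp (- lam * t) * norm x))
      with (M0 * norm x * (exp (lam / 2 * t) * exp (- lam * t))) by ring.
    nra.
Qed.

Lemma decay_sup_lipschitz x y :
  decay_sup x <= decay_sup y + exp (lam / 2 * tau) * C * norm (minus x y).
Proof.
  apply decay_sup_le. intros z [s [t [z1 [ht [Hz ->]]]]].
  destruct (Hlip s x y t z1 ht Hz) as [z2 [Hz2 Hz12]].
  assert (H2 : exp (lam / 2 * t) * norm z2 <= decay_sup y).
  { apply (Lub_Rbar_ub _ (exp (lam / 2 * tau) * C * norm y));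
      [apply weighted_norms_bounded | exists s, t, z2; auto]. }
  assert (He : exp (lam / 2 * t) <= exp (lam / 2 * tau)) by (apply exp_le_compat; nra).
  assert (Hn := norm_le_minus z1 z2).
  assert (0 < exp (lam / 2 * t)) by apply exp_pos.
  assert (0 <= C * norm (minus x y)) by (apply Rmult_le_pos; [lra | apply norm_ge_0]).
  rewrite Rmult_assoc. nra.
Qed.

Lemma decay_sup_flow q x h : norm x <= r -> 0 < h ->
  decay_sup (Tq q h x) <= exp (- (lam / 2) * h) * decay_sup x.
Proof.
  intros hx hh. apply decay_sup_le. intros z [s [t [y [ht [Hy ->]]]]].
  assert (Hy' := phi_is_cons Tq q h hh s x t y Hy).
  replace (exp (lam / 2 * t) * norm y)
    with (exp (- (lam / 2) * h) * (exp (lam / 2 * (t + h)) * norm y))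
    by (rewrite <- Rmult_assoc, <- exp_plus; f_equal; f_equal; ring).
  apply Rmult_le_compat_l; [left; apply exp_pos|].
  destruct (Rle_or_lt (t + h) tau) as [hle | hlt].
  - apply (Lub_Rbar_ub _ (exp (lam / 2 * tau) * C * norm x));
      [apply weighted_norms_bounded | exists (pc_cons q h hh s), (t + h), y; split; [lra|auto]].
  - eapply Rle_trans; [|apply norm_le_decay_sup].
    assert (H := Hstab _ x (t + h) y ltac:(lra) hx Hy').
    assert (He : exp (lam / 2 * (t + h)) * exp (- lam * (t + h)) <= exp (- (lam / 2) * tau)).
    { rewrite <- exp_plus. apply exp_le_compat. nra. }
    assert (0 < exp (lam / 2 * (t + h))) by apply exp_pos.
    assert (0 <= norm x) by apply norm_ge_0.
    apply Rle_trans with (exp (lam / 2 * (t + h)) * (M0 * exp (- lam * (t + h)) * norm x)).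
    + apply Rmult_le_compat_l; lra.
    + replace (exp (lam / 2 * (t + h)) * (M0 * exp (- lam * (t + h)) * norm x))
        with (M0 * (exp (lam / 2 * (t + h)) * exp (- lam * (t + h))) * norm x) by ring.
      assert (M0 * (exp (lam / 2 * (t + h)) * exp (- lam * (t + h))) <= 1).
      { eapply Rle_trans; [|exact Htail]. apply Rmult_le_compat_l; lra. }
      nra.
Qed.

Lemma decay_sup_decrease q x h : norm x <= r -> 0 < h < 2 / lam ->
  4 / lam * decay_sup (Tq q h x) - 4 / lam * decay_sup x <= - h * norm x.
Proof.
  intros hx hh.
  assert (Hu : 0 <= lam / 2 * h <= 1).
  { split; [nra|]. destruct hh as [_ hh].
    apply Rmult_lt_compat_l with (r := lam / 2) in hh; [|lra].
    replace (lam / 2 * (2 / lam)) with 1 in hh by (field; lra). lra. }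
  assert (He := exp_opp_le _ Hu).
  replace (- (lam / 2 * h)) with (- (lam / 2) * h) in He by ring.
  assert (Hd := decay_sup_flow q x h hx (proj1 hh)).
  assert (Hn := norm_le_decay_sup x).
  assert (H0 := decay_sup_nonneg x).
  replace (4 / lam * decay_sup (Tq q h x) - 4 / lam * decay_sup x)
    with (4 / lam * (decay_sup (Tq q h x) - decay_sup x)) by ring.
  apply Rle_trans with (4 / lam * (- (lam / 4 * h) * decay_sup x)).
  - apply Rmult_le_compat_l; [apply Rlt_le, Rdiv_lt_0_compat; lra | nra].
  - replace (4 / lam * (- (lam / 4 * h) * decay_sup x)) with (- h * decay_sup x)
      by (field; lra).
    destruct hh. nra.
Qed.

Theorem converse_lyapunov_ball :
  exists (cl cu : R) (V : X -> R),
    0 < cl /\ 0 < cu /\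
    (forall x, 0 <= V x) /\ Lipschitz V /\
    (forall x, norm x <= r -> cl * norm x <= V x /\ V x <= cu * norm x) /\
    (forall x q, norm x <= r -> Rbar_le (dini_upper Tq V q x) (Finite (- norm x))).
Proof.
  assert (hk : 0 < 4 / lam) by (apply Rdiv_lt_0_compat; lra).
  exists (4 / lam), (4 / lam * M0), (fun x => 4 / lam * decay_sup x).
  split; [exact hk|]. split; [nra|].
  split; [intros x; apply Rmult_le_pos; [lra | apply decay_sup_nonneg]|].
  split.
  { apply (Lipschitz_scale _ _ (exp (lam / 2 * tau) * C)); [lra | | apply decay_sup_lipschitz].
    apply Rmult_le_pos; [left; apply exp_pos | exact hC]. }
  split.
  { intros x hx. split.
    - apply Rmult_le_compat_l; [lra | apply norm_le_decay_sup].
    - rewrite Rmult_assoc. apply Rmult_le_compat_l; [lra | apply decay_sup_ball, hx]. }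
  intros x q hx. apply (dini_upper_le _ _ _ _ (2 / lam)); [apply Rdiv_lt_0_compat; lra|].
  intros h hh. apply decay_sup_decrease; assumption.
Qed.

End ConverseLyapunov.

Theorem lemma1
  (X U : CompleteNormedModule R_AbsRing)
  (T : R -> X -> X) (HT : C0_group T)
  (Q : Type) (HQ : inhabited Q)
  (f : Q -> X -> U -> X) (Lf : R) (HLf : 0 < Lf)
  (Hf : forall q x y u v,
     norm (minus (f q x u) (f q y v)) <= Lf * (norm (minus x y) + norm (minus u v)))
  (Hf0 : forall q, f q zero zero = zero)
  (K : X -> U) (HK : Lipschitz K) (HK0 : K zero = zero)
  (Tq : Q -> R -> X -> X)
  (Hsol : forall q x0, mild_solution T (fun x => f q x (K x)) x0 (fun t => Tq q t x0))
  (Hstab : USGES Tq) :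
  forall r, 0 < r ->
  exists (cl cu : R) (V : X -> R),
    0 < cl /\ 0 < cu /\
    (forall x, 0 <= V x) /\ Lipschitz V /\
    (forall x, norm x <= r -> cl * norm x <= V x /\ V x <= cu * norm x) /\
    (forall x q, norm x <= r -> Rbar_le (dini_upper Tq V q x) (Finite (- norm x))).
Proof.
  intros r hr. destruct HQ as [q0].
  destruct (Hstab r hr) as [M0 [lam [hM0 [hlam Hdecay]]]].
  destruct (exp_tail_le_1 M0 (lam / 2) hM0 ltac:(lra)) as [tau [htau Htail]].
  destruct (C0_group_bounded X T tau HT) as [M [hM HTM]].
  destruct HK as [LK [hLK HKL]].
  set (F := fun q x => f q x (K x)).
  assert (HF : forall q x y, norm (minus (F q x) (F q y)) <= Lf * (1 + LK) * norm (minus x y)).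
  { intros q x y. eapply Rle_trans; [apply Hf|]. rewrite Rmult_assoc.
    apply Rmult_le_compat_l; [lra|].
    apply Rle_trans with (norm (minus x y) + LK * norm (minus x y)); [|lra].
    apply Rplus_le_compat_l. exact (HKL x y). }
  assert (hL : 0 < Lf * (1 + LK)) by nra.
  apply (converse_lyapunov_ball X Q Tq q0 r M0 lam tau
           (exp (2 * (M * (Lf * (1 + LK))) * tau) * M)); try lra.
  - exact (flow_0 X T Q F Tq HT Hsol).
  - left. apply Rmult_lt_0_compat; [apply exp_pos | exact hM].
  - exact Hdecay.
  - exact (phi_is_lipschitz X T Q F Tq _ M tau HT hL HF hM HTM Hsol).
Qed.
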